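(* Let $c(t)=\sum_{n\ge0}c_nt^n\in\mathbb Q[h,\beta,\gamma][[t]]$. Then $$\Big(1-\frac\beta4t^2\Big)^2\frac{d}{dt}c(t)=(c(t)-1)\Big(h\Big(1-\frac\beta4t^2\Big)-\gamma\frac{t^2}2\Big).$$
   Context: $h,\beta,\gamma$ are formal variables. The $c_n\in\mathbb Q[h,\beta,\gamma]$ are defined by $c_0=2$ and, for $n\ge1$, by $\log\big(1+\sum_{n\ge1}c_nt^n\big)=\sum_{m\ge1}(-1)^{m-1}(m-1)!\,\mathrm{ch}_mt^m$, where $\mathrm{ch}_1=h$, $\mathrm{ch}_{2n}=0$, and $\mathrm{ch}_{2n-1}=\frac1{(2n-1)!}\big(\frac{\beta h}4-\frac{n-1}2\gamma\big)\big(\frac\beta4\big)^{n-2}$ for $n\ge2$ (i.e. $1+\sum_{n\ge1}c_nt^n$ is the total Chern polynomial of a virtual class with Chern character components $\mathrm{ch}_m$). *)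

From mathcomp Require Import all_boot all_order all_algebra.
From mathcomp Require Import mpoly.
Set Implicit Arguments. Unset Strict Implicit. Unset Printing Implicit Defensive.
Import GRing.Theory.
Local Open Scope ring_scope.

Definition P := {mpoly rat[3]}.
Definition vh : P := 'X_(@Ordinal 3 0 isT).
Definition vbeta : P := 'X_(@Ordinal 3 1 isT).
Definition vgamma : P := 'X_(@Ordinal 3 2 isT).
Definition qc (q : rat) : P := q%:MP.

Definition ps := nat -> P.
Definition ps_const (a : P) : ps := fun n => if n == 0%N then a else 0.
Definition ps_t : ps := fun n => if n == 1%N then 1 else 0.
Definition ps_add (f g : ps) : ps := fun n => f n + g n.
Definition ps_sub (f g : ps) : ps := fun n => f n - g n.
Definition ps_scale (a : P) (f : ps) : ps := fun n => a * f n.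
Definition ps_mul (f g : ps) : ps :=
  fun n => \sum_(i < n.+1) f i * g (n - i)%N.
Definition ps_pow (f : ps) (k : nat) : ps := iter k (ps_mul f) (ps_const 1).
Definition ps_deriv (f : ps) : ps := fun n => (n.+1)%:R * f n.+1.

(* Formal logarithm log(1 + X) = sum_{k>=1} (-1)^(k-1) X^k / k, for X with
   zero constant term; the coefficient of t^n only involves k <= n
   (the terms k > n vanish since X(0) = 0), so this truncation is exact. *)
Definition ps_log1p (X : ps) : ps :=
  fun n => \sum_(1 <= k < n.+1) qc ((-1) ^+ k.-1 / k%:R) * ps_pow X k n.

Definition ch (m : nat) : P :=
  if m == 1%N then vh
  else if ~~ odd m then 0
  else let n := (m.+1 %/ 2)%N in   (* m = 2n - 1, n >= 2 *)
       qc (1 / (m`!)%:R) *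
       (vbeta * vh * qc (1 / 4) - qc ((n.-1)%:R / 2) * vgamma) *
       (vbeta * qc (1 / 4)) ^+ (n - 2).

Definition c_defining (c : nat -> P) : Prop :=
  c 0%N = 2 /\
  forall m : nat, (0 < m)%N ->
    ps_log1p (fun n => if n == 0%N then 0 else c n) m
    = qc ((-1) ^+ m.-1 * (m.-1)`!%:R) * ch m.

(* Since c_0 = 2, c(t) - 1 = 1 + x(t) with x(0) = 0, and the definition says that
   log(1 + x) = l(t) := sum_m (-1)^(m-1) (m-1)! ch_m t^m.  Differentiating gives
   c' = x' = (1 + x) l' = (c - 1) l'.  The series l' is explicit: it vanishes in odd
   degrees, is h in degree 0 and (beta h/4 - j gamma/2) (beta/4)^(j-1) in degree 2j >= 2,
   an affine function of j times a geometric sequence of ratio beta/4.  Such a sequence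
   is killed by the second difference at ratio beta/4, so (1 - beta/4 t^2)^2 l' is the
   polynomial h (1 - beta/4 t^2) - gamma t^2/2.  Series identities are checked
   coefficientwise on polynomial truncations. *)
From mathcomp Require Import all_boot all_order all_algebra.
From mathcomp Require Import mpoly.
From mathcomp Require Import ring.
Set Implicit Arguments. Unset Strict Implicit. Unset Printing Implicit Defensive.
Import GRing.Theory.
Local Open Scope ring_scope.

Section PolyLowCoef.
Variable R : comNzRingType.

Definition eq_upto (N : nat) (p q : {poly R}) := forall m, (m <= N)%N -> p`_m = q`_m.

Lemma eq_upto_trans N p q r : eq_upto N p q -> eq_upto N q r -> eq_upto N p r.
Proof. by move=> Hpq Hqr m Hm; rewrite Hpq // Hqr. Qed.

Lemma eq_upto_mull N r p q : eq_upto N p q -> eq_upto N (r * p) (r * q).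
Proof.
move=> Hpq m Hm; rewrite !coefM; apply: eq_bigr => i _.
by rewrite Hpq // (leq_trans (leq_subr _ _) Hm).
Qed.

Lemma coef_exp_small (p : {poly R}) k m : p`_0 = 0 -> (m < k)%N -> (p ^+ k)`_m = 0.
Proof.
move=> p0; elim: k m => [//|k IHk] m lt_mk; rewrite exprS coefM big1 // => -[[|j] ltj] _ /=.
  by rewrite p0 mul0r.
rewrite IHk ?mulr0 // ltn_subLR // addSn ltnS (leq_trans _ (leq_addl _ _)) //.
Qed.

Lemma mul_geometric_sum (x : {poly R}) N :
  (1 + x) * \sum_(0 <= i < N) (- x) ^+ i = 1 - (- x) ^+ N.
Proof. by rewrite big_mkord -opprB subrX1 -mulNr opprB opprK. Qed.

End PolyLowCoef.

Definition agree_upto (N : nat) (f : ps) (p : {poly P}) :=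
  forall m, (m <= N)%N -> f m = p`_m.

Definition trunc (N : nat) (f : ps) : {poly P} := \poly_(i < N.+1) f i.

Lemma agree_upto_trunc N f : agree_upto N f (trunc N f).
Proof. by move=> m Hm; rewrite coef_poly ltnS Hm. Qed.

Lemma agree_upto_const N a : agree_upto N (ps_const a) a%:P.
Proof. by move=> m _; rewrite coefC. Qed.

Lemma agree_upto_t N : agree_upto N ps_t 'X.
Proof. by move=> m _; rewrite /ps_t coefX; case: (m == 1%N). Qed.

Lemma agree_upto_sub N f g p q :
  agree_upto N f p -> agree_upto N g q -> agree_upto N (ps_sub f g) (p - q).
Proof. by move=> Hf Hg m Hm; rewrite /ps_sub coefB Hf // Hg. Qed.

Lemma agree_upto_scale N a f p : agree_upto N f p -> agree_upto N (ps_scale a f) (a%:P * p).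
Proof. by move=> Hf m Hm; rewrite /ps_scale coefCM Hf. Qed.

Lemma agree_upto_mul N f g p q :
  agree_upto N f p -> agree_upto N g q -> agree_upto N (ps_mul f g) (p * q).
Proof.
move=> Hf Hg m Hm; rewrite /ps_mul coefM; apply: eq_bigr => i _.
rewrite Hf ?Hg //; apply: leq_trans Hm; [exact: leq_subr | by rewrite -ltnS].
Qed.

Lemma agree_upto_pow N f p k : agree_upto N f p -> agree_upto N (ps_pow f k) (p ^+ k).
Proof.
move=> Hf; elim: k => [|k IHk]; first by rewrite expr0 -polyC1; apply: agree_upto_const.
by rewrite exprS /ps_pow iterS; apply: agree_upto_mul.
Qed.

Lemma agree_upto_sqr_t N : agree_upto N (ps_mul ps_t ps_t) ('X * 'X).
Proof. exact: agree_upto_mul (@agree_upto_t N) (@agree_upto_t N). Qed.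

Definition log_coef (k : nat) : P := qc ((-1) ^+ k.-1 / k%:R).

Definition log1p_poly (N : nat) (x : {poly P}) : {poly P} :=
  \sum_(1 <= k < N.+1) (log_coef k)%:P * x ^+ k.

Lemma ps_log1p_trunc N X : X 0%N = 0 ->
  agree_upto N (ps_log1p X) (log1p_poly N (trunc N X)).
Proof.
move=> X0 m le_mN; have trX0 : (trunc N X)`_0 = 0 by rewrite coef_poly.
rewrite /ps_log1p /log1p_poly coef_sum.
rewrite (@big_cat_nat _ _ _ m.+1 1 N.+1) ?ltnS //=.
rewrite [X in _ + X]big_nat_cond [X in _ + X]big1 ?addr0 => [|k /andP[/andP[lt_mk _] _]].
  apply: eq_bigr => k _; rewrite coefCM (agree_upto_pow k (@agree_upto_trunc N X)) //.
by rewrite coefCM coef_exp_small ?mulr0.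
Qed.

Lemma log_coef_mulrn k : (0 < k)%N -> log_coef k *+ k = (-1) ^+ k.-1.
Proof.
move=> k_gt0; rewrite /log_coef /qc -rmorphMn -mulr_natr divfK.
  by rewrite rmorphXn rmorphN1.
by rewrite Num.Theory.pnatr_eq0 -lt0n.
Qed.

Lemma deriv_log1p_poly N x : (log1p_poly N x)^`() = x^`() * \sum_(0 <= i < N) (- x) ^+ i.
Proof.
rewrite /log1p_poly raddf_sum /= mulr_sumr big_add1 /=; apply: eq_big_nat => k lt_kN.
rewrite deriv_mulC deriv_exp /= mulrnAr -mulrnAl -raddfMn /= log_coef_mulrn //.
by rewrite rmorphXn rmorphN1 [in RHS]exprNn /=; ring.
Qed.

Lemma mul_deriv_log1p_poly N (x : {poly P}) : x`_0 = 0 ->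
  eq_upto N x^`() ((1 + x) * (log1p_poly N.+1 x)^`()).
Proof.
move=> x0 m le_mN; apply/esym.
rewrite deriv_log1p_poly mulrCA mul_geometric_sum mulrBr mulr1 coefB.
rewrite [X in _ - X]coefM big1 ?subr0 // => -[j ltj] _ /=.
rewrite coef_exp_small ?mulr0 ?coefN ?x0 ?oppr0 //.
by rewrite ltnS (leq_trans (leq_subr _ _) le_mN).
Qed.

Lemma fact_ratio k : 1 * k`!%:R * (1 / (k.+1)`!%:R) *+ k.+1 = 1 :> rat.
Proof.
have fact_neq0 n : (n`!%:R : rat) != 0 by rewrite Num.Theory.pnatr_eq0 -lt0n fact_gt0.
by rewrite mul1r factS natrM -mulr_natr; field; rewrite fact_neq0 nat1r Num.Theory.pnatr_eq0.
Qed.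

Lemma qc1 : qc 1 = 1.
Proof. exact: rmorph1. Qed.

Lemma qc_nat_half j : qc (j%:R / 2) = j%:R * qc (1 / 2).
Proof. by rewrite /qc rmorphM /= rmorph_nat div1r. Qed.

Definition bb : P := vbeta * qc (1 / 4).

Definition logc_coef (m : nat) : P := qc ((-1) ^+ m.-1 * (m.-1)`!%:R) * ch m.

(* [dlog_even j] is the coefficient of t^(2j) in l'(t) = d/dt log(c(t) - 1). *)
Definition dlog_even (j : nat) : P :=
  if j is j'.+1 then (vbeta * vh * qc (1 / 4) - qc (j%:R / 2) * vgamma) * bb ^+ j'
  else vh.

Definition dlog_coef (i : nat) : P := if odd i then 0 else dlog_even i./2.

Lemma logc_coef_mulrn i : logc_coef i.+1 *+ i.+1 = dlog_coef i.
Proof.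
rewrite /logc_coef /dlog_coef /ch /=; have [i_odd|i_even] := boolP (odd i).
  by case: i i_odd => [|i] //= _; rewrite mulr0 mul0rn.
rewrite -[i](odd_double_half i) (negbTE i_even) add0n doubleK.
case: i./2 => [|j]; first by rewrite /= qc1 !mul1r.
have -> : (j.+1.*2.+2 %/ 2 = j.+2)%N by rewrite -doubleS -muln2 mulnK.
rewrite /= subSS subSS subn0 -muln2 exprM sqrr_sign; set k := (j.+1 * 2)%N.
have qc_factor x y (S T : P) : qc x * (qc y * S * T) *+ k.+1 = qc (x * y *+ k.+1) * (S * T).
  by rewrite /qc rmorphMn rmorphM; ring.
rewrite qc_factor (_ : _ *+ k.+1 = 1); last exact: fact_ratio.
by rewrite qc1 mul1r.
Qed.

(* [dlog_even j.+1] is affine in j times bb^j; the value at j = 0 fits the pattern too. *)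
Lemma dlog_even_recurrence j :
  dlog_even j.+2 - bb *+ 2 * dlog_even j.+1 + bb ^+ 2 * dlog_even j = 0.
Proof. by case: j => [|j]; rewrite /dlog_even /bb !qc_nat_half ?exprS; ring. Qed.

Definition Ap : {poly P} := 1 - bb%:P * ('X * 'X).
Definition Rp : {poly P} := vh%:P * Ap - (vgamma * qc (1 / 2))%:P * ('X * 'X).
Definition dlog_poly (n : nat) : {poly P} := \poly_(i < n.+1) dlog_coef i.

Lemma sqr_Ap_mul_dlog_poly n : eq_upto n (Ap * Ap * dlog_poly n) Rp.
Proof.
have -> : Ap * Ap * dlog_poly n = dlog_poly n - (bb *+ 2)%:P * ('X^2 * dlog_poly n)
                                 + (bb ^+ 2)%:P * ('X^4 * dlog_poly n).
  by rewrite /Ap raddfMn rmorphXn /=; ring.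
move=> m le_mn; rewrite coefD coefB !coefCM !coefXnM.
rewrite /Rp coefB !coefCM /Ap coefB coefCM -expr2 coefXn coef1 !coef_poly.
rewrite !ltnS le_mn !(leq_trans (leq_subr _ _) le_mn) {le_mn}.
case: m => [|[|[|[|m]]]]; rewrite /dlog_coef /=;
  try by rewrite /dlog_even /bb ?qc_nat_half; ring.
rewrite !subSS subn0 !negbK; case: (odd m) => /=; first ring.
by have /= -> := dlog_even_recurrence m./2; ring.
Qed.

Lemma agree_upto_Ap N :
  agree_upto N (ps_sub (ps_const 1) (ps_scale bb (ps_mul ps_t ps_t))) Ap.
Proof.
apply: agree_upto_sub; first by rewrite -polyC1; apply: agree_upto_const.
exact/agree_upto_scale/agree_upto_sqr_t.
Qed.

Lemma agree_upto_Rp N :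
  agree_upto N (ps_sub (ps_scale vh (ps_sub (ps_const 1) (ps_scale bb (ps_mul ps_t ps_t))))
                       (ps_scale (vgamma * qc (1 / 2)) (ps_mul ps_t ps_t))) Rp.
Proof.
by apply: agree_upto_sub; apply: agree_upto_scale; [apply: agree_upto_Ap | apply: agree_upto_sqr_t].
Qed.

Definition nonconst (c : ps) : ps := fun n => if n == 0%N then 0 else c n.

Lemma c_log_derivative c n : c_defining c ->
  eq_upto n (trunc n.+1 (nonconst c))^`() ((1 + trunc n.+1 (nonconst c)) * dlog_poly n).
Proof.
move=> [_ log_c]; set x := trunc n.+1 (nonconst c).
have x0 : x`_0 = 0 by rewrite coef_poly.
apply: eq_upto_trans (mul_deriv_log1p_poly x0) (eq_upto_mull _ _) => m le_mn.
rewrite coef_deriv coef_poly ltnS le_mn -(@ps_log1p_trunc n.+1) ?ltnS //.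
by rewrite log_c // -logc_coef_mulrn.
Qed.

Theorem lemma4p1 (c : nat -> P) :
  c_defining c ->
  let A : ps := ps_sub (ps_const 1)
                  (ps_scale (vbeta * qc (1 / 4)) (ps_mul ps_t ps_t)) in
  forall n : nat,
    ps_mul (ps_mul A A) (ps_deriv c) n
    = ps_mul (ps_sub c (ps_const 1))
        (ps_sub (ps_scale vh A)
                (ps_scale (vgamma * qc (1 / 2)) (ps_mul ps_t ps_t))) n.
Proof.
move=> c_def A n; set x := trunc n.+1 (nonconst c).
have agree_dc : agree_upto n (ps_deriv c) x^`().
  by move=> m le_mn; rewrite coef_deriv coef_poly !ltnS le_mn /ps_deriv mulr_natl.
have agree_c1 : agree_upto n (ps_sub c (ps_const 1)) (1 + x).
  move=> m le_mn; rewrite /ps_sub /ps_const coefD coef1 coef_poly.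
  case: m le_mn => [|m] le_mn /=; first by rewrite c_def.1; ring.
  by rewrite ltnS (leq_trans le_mn) // subr0 add0r.
have agree_A : agree_upto n A Ap := @agree_upto_Ap n.
rewrite (agree_upto_mul (agree_upto_mul agree_A agree_A) agree_dc) //.
rewrite (agree_upto_mul agree_c1 (@agree_upto_Rp n)) //.
have log_der := eq_upto_mull (Ap * Ap) (@c_log_derivative c n c_def).
rewrite -/x mulrCA in log_der.
exact: eq_upto_trans log_der (eq_upto_mull _ (@sqr_Ap_mul_dlog_poly n)) _ (leqnn n).
Qed.
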